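(* Let $k\ge2$, $L\ge3$, and let $T:\Pi_L\to\Sigma_k$ be the map constructed below (with $\Pi=\Pi_L$). Let $y\in Trans(\Pi_L)$ and $i\in\{1,\dots,6\}$. If $y$ satisfies Case $(i)$ in $\Pi_L$, then $T(y)$ satisfies Case $(i')$ in $\Sigma_k$.
   Context: $\Sigma_k=\{0,\dots,k-1\}^{\mathbb{N}}$ with metric $d(x,y)=\sum_{n\ge1}\delta(x_n,y_n)/2^n$ ($\delta(a,b)=0$ if $a=b$, $1$ otherwise) and shift $\sigma$. $\Pi_L=\{x\in\Sigma_k:$ no $L$ consecutive symbols of $x$ are all equal$\}$; $Trans(\Pi_L)=\{y\in\Pi_L:\omega_\sigma(y)=\Pi_L\}$. A finite word is contained in $\Pi$ if it is a prefix of some point of $\Pi$. Construction of $T$: enumerate all finite words contained in $\Pi$ as $C_1,C_2,\dots$; fix a finite word $A_1$ not contained in $\Pi$; for $y\in\Pi$ let $Y_n$ be its first $n$ symbols; $B_n=C_nY_n\cdots Y_n$ ($Y_n$ repeated $|A_n|^2$ times), $A_{n+1}=A_nB_nA_n$; $T(y)$ is the point having every $A_n$ as prefix; the construction requires $|C_n|=o(|A_n|)$. $N(x,U)=\{n\ge1:\sigma^nx\in U\}$; $\overline d,\underline d$ upper/lower asymptotic densities, $B^*,B_*$ Banach upper/lower densities; $\omega_\xi(x)=\{z:\xi(N(x,B_\varepsilon(z)))>0\ \forall\varepsilon>0\}$; $\omega_\sigma$ the $\omega$-limit set. Writing $\omega_\xi$ for $\omega_\xi(x)$: Case (1) $\omega_{B_*}\subsetneq\omega_{\underline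 d}=\omega_{\overline d}=\omega_{B^*}=\omega_\sigma$; (2) $\omega_{B_*}\subsetneq\omega_{\underline d}=\omega_{\overline d}\subsetneq\omega_{B^*}=\omega_\sigma$; (3) $\omega_{B_*}=\omega_{\underline d}\subsetneq\omega_{\overline d}=\omega_{B^*}=\omega_\sigma$; (4) $\omega_{B_*}\subsetneq\omega_{\underline d}\subsetneq\omega_{\overline d}=\omega_{B^*}=\omega_\sigma$; (5) $\omega_{B_*}=\omega_{\underline d}\subsetneq\omega_{\overline d}\subsetneq\omega_{B^*}=\omega_\sigma$; (6) $\omega_{B_*}\subsetneq\omega_{\underline d}\subsetneq\omega_{\overline d}\subsetneq\omega_{B^*}=\omega_\sigma$. Case $(i')$ is Case $(i)$ with the final equality $\omega_{B^*}=\omega_\sigma$ replaced by the strict inclusion $\omega_{B^*}\subsetneq\omega_\sigma$. *)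

From Stdlib Require Import Reals List Arith ClassicalDescription.
From Coquelicot Require Import Coquelicot.
Open Scope R_scope.

(* Points of the full shift: x : nat -> nat, with x n standing for the
   paper's x_{n+1} (0-based storage of sequences indexed by N = {1,2,...}). *)
Definition point := nat -> nat.

Definition in_Sigma (k : nat) (x : point) : Prop := forall n, (x n < k)%nat.

Definition delta (a b : nat) : R := if Nat.eqb a b then 0 else 1.

Definition dist (x y : point) : R :=
  Series (fun n => delta (x n) (y n) / 2 ^ (S n)).

Definition shiftn (n : nat) (x : point) : point := fun m => x (n + m)%nat.

Definition ball (z : point) (eps : R) : point -> Prop := fun w => dist w z < eps.

Definition Pi (k L : nat) (x : point) : Prop :=
  in_Sigma k x /\ forall n, ~ (forall j, (j < L)%nat -> x (n + j)%nat = x n).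

Definition is_prefix (w : list nat) (x : point) : Prop :=
  forall i, (i < length w)%nat -> x i = nth i w 0%nat.

Definition contained (X : point -> Prop) (w : list nat) : Prop :=
  exists x, X x /\ is_prefix w x.

Definition Nset (x : point) (U : point -> Prop) : nat -> Prop :=
  fun n => (1 <= n)%nat /\ U (shiftn n x).

Definition ind (A : nat -> Prop) (n : nat) : R :=
  if excluded_middle_informative (A n) then 1 else 0.

Fixpoint cnt (A : nat -> Prop) (a n : nat) : R :=
  match n with
  | O => 0
  | S m => cnt A a m + ind A (a + S m)
  end.

Definition dens_up (A : nat -> Prop) : Rbar :=
  LimSup_seq (fun n => cnt A 0 n / INR n).
Definition dens_low (A : nat -> Prop) : Rbar :=
  LimInf_seq (fun n => cnt A 0 n / INR n).
Definition banach_up (A : nat -> Prop) : Rbar :=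
  Lim_seq (fun n => real (Sup_seq (fun m => Finite (cnt A m n / INR n)))).
Definition banach_low (A : nat -> Prop) : Rbar :=
  Lim_seq (fun n => real (Inf_seq (fun m => Finite (cnt A m n / INR n)))).

Definition omega_xi (X : point -> Prop) (xi : (nat -> Prop) -> Rbar) (x : point)
  : point -> Prop :=
  fun z => X z /\ forall eps, 0 < eps -> Rbar_lt (Finite 0) (xi (Nset x (ball z eps))).

Definition omega_sigma (X : point -> Prop) (x : point) : point -> Prop :=
  fun z => X z /\ forall eps, 0 < eps -> forall M : nat,
      exists n : nat, (M <= n)%nat /\ dist (shiftn n x) z < eps.

Definition Trans (k L : nat) (y : point) : Prop :=
  Pi k L y /\ forall z, omega_sigma (Pi k L) y z <-> Pi k L z.

Definition seteq (P Q : point -> Prop) : Prop := forall z, P z <-> Q z.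
Definition ssub (P Q : point -> Prop) : Prop :=
  (forall z, P z -> Q z) /\ ~ seteq P Q.

(* Case (i) (primed = false) or Case (i') (primed = true) for x in ambient X. *)
Definition Case (X : point -> Prop) (x : point) (i : nat) (primed : bool) : Prop :=
  let oBl := omega_xi X banach_low x in
  let odl := omega_xi X dens_low x in
  let odu := omega_xi X dens_up x in
  let oBu := omega_xi X banach_up x in
  let os := omega_sigma X x in
  let last := if primed then ssub oBu os else seteq oBu os in
  match i with
  | 1%nat => ssub oBl odl /\ seteq odl odu /\ seteq odu oBu /\ last
  | 2%nat => ssub oBl odl /\ seteq odl odu /\ ssub odu oBu /\ last
  | 3%nat => seteq oBl odl /\ ssub odl odu /\ seteq odu oBu /\ last
  | 4%nat => ssub oBl odl /\ ssub odl odu /\ seteq odu oBu /\ last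
  | 5%nat => seteq oBl odl /\ ssub odl odu /\ ssub odu oBu /\ last
  | 6%nat => ssub oBl odl /\ ssub odl odu /\ ssub odu oBu /\ last
  | _ => False
  end.

Definition Yw (y : point) (n : nat) : list nat := map y (seq 0 n).
Definition rep (w : list nat) (m : nat) : list nat := concat (repeat w m).

(* Aseq A1 C y m = A_{m+1};  A_{n+1} = A_n B_n A_n, B_n = C_n Y_n^{|A_n|^2} *)
Fixpoint Aseq (A1 : list nat) (C : nat -> list nat) (y : point) (m : nat) : list nat :=
  match m with
  | O => A1
  | S m' =>
      let a := Aseq A1 C y m' in
      a ++ (C m ++ rep (Yw y m) (length a ^ 2)) ++ a
  end.

(* T(y) consists mostly of the blocks Y_n^{|A_n|^2}, copies of the prefix of y of length n:
   |C_n| = o(|A_n|), and each copy of A_n is short compared with the block that follows it.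
   Hence for every cylinder the visits of T(y) have positive lower (upper) density exactly
   when those of y do, which makes the omega_{d_low}- and omega_{d_up}-sets of T(y) and y
   equal.  Both omega_{B_low}-sets are empty: for every z one of the periodic points
   (01)^oo, (0011)^oo of Pi_L never enters the 3-cylinder of z, and arbitrarily long pieces
   of it occur in y (by transitivity) and in T(y) (as words C_n).  A cylinder meeting Pi_L
   is seen by T(y) wherever y sees it, in the long copies of prefixes of y; a cylinder
   missing Pi_L can be entered by T(y) only just before the end of a copy of some A_{n+1}
   or across a seam between C_n and the copies of Y_n, and these places are so sparse that
   the visits have upper Banach density 0.  So omega_{B^up}(T y) = omega_{B^up}(y) once the
   latter is Pi_L, and this is strictly smaller than omega_sigma(T y), which contains T(y)
   itself (A_n reappears at the end of A_{n+1}) although T(y) is not in Pi_L. *)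

From Pilot Require Import Defs.
From Stdlib Require Import Reals List Arith Lia Lra ClassicalDescription Classical.
From Coquelicot Require Import Coquelicot.
Open Scope R_scope.

Lemma ind_bounds (A : nat -> Prop) j : 0 <= Defs.ind A j <= 1.
Proof. unfold Defs.ind; destruct (excluded_middle_informative (A j)); lra. Qed.

Lemma ind_le (A B : nat -> Prop) i j : (A i -> B j) -> Defs.ind A i <= Defs.ind B j.
Proof.
  unfold Defs.ind; destruct (excluded_middle_informative (A i));
    destruct (excluded_middle_informative (B j)); intro H; try lra; tauto.
Qed.

Lemma ind_true (A : nat -> Prop) j : A j -> Defs.ind A j = 1.
Proof. unfold Defs.ind; destruct (excluded_middle_informative (A j)); tauto. Qed.

Lemma ind_false (A : nat -> Prop) j : ~ A j -> Defs.ind A j = 0.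
Proof. unfold Defs.ind; destruct (excluded_middle_informative (A j)); tauto. Qed.

Lemma cnt_add A a n m : cnt A a (n + m) = cnt A a n + cnt A (a + n) m.
Proof.
  induction m as [|m IH]; simpl.
  - rewrite Nat.add_0_r; lra.
  - rewrite Nat.add_succ_r; simpl. rewrite IH.
    replace (a + S (n + m))%nat with (a + n + S m)%nat by lia. lra.
Qed.

Lemma cnt_bounds A a n : 0 <= cnt A a n <= INR n.
Proof.
  induction n as [|n IH]; simpl cnt; [simpl; lra|].
  pose proof (ind_bounds A (a + S n)). rewrite S_INR. lra.
Qed.

Lemma cnt_le (A B : nat -> Prop) a b n :
  (forall i, (1 <= i <= n)%nat -> A (a + i)%nat -> B (b + i)%nat) ->
  cnt A a n <= cnt B b n.
Proof.
  induction n as [|n IH]; intro H; simpl; [lra|].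
  pose proof (ind_le A B (a + S n) (b + S n) (H (S n) ltac:(lia))).
  assert (cnt A a n <= cnt B b n) by (apply IH; intros; apply H; auto; lia). lra.
Qed.

Lemma cnt_ext (A B : nat -> Prop) a b n :
  (forall i, (1 <= i <= n)%nat -> A (a + i)%nat <-> B (b + i)%nat) ->
  cnt A a n = cnt B b n.
Proof. intro H. apply Rle_antisym; apply cnt_le; intros i Hi; apply H in Hi; tauto. Qed.

Lemma cnt_eq0 (A : nat -> Prop) a n :
  (forall i, (1 <= i <= n)%nat -> ~ A (a + i)%nat) -> cnt A a n = 0.
Proof.
  induction n as [|n IH]; intro H; simpl; [reflexivity|].
  rewrite IH, ind_false by (intros; apply H; lia). lra.
Qed.

Lemma cnt_union (A B D : nat -> Prop) a n :
  (forall j, A j -> B j \/ D j) -> cnt A a n <= cnt B a n + cnt D a n.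
Proof.
  intro H. induction n as [|n IH]; simpl; [lra|].
  assert (Defs.ind A (a + S n) <= Defs.ind B (a + S n) + Defs.ind D (a + S n)); [|lra].
  unfold Defs.ind. destruct (excluded_middle_informative (A (a + S n)%nat)) as [HA|];
    destruct (excluded_middle_informative (B (a + S n)%nat));
    destruct (excluded_middle_informative (D (a + S n)%nat)); try lra.
  destruct (H _ HA); tauto.
Qed.

Lemma cnt_le_length A a n m : (n <= m)%nat -> cnt A a n <= cnt A a m.
Proof.
  intro H. replace m with (n + (m - n))%nat by lia. rewrite cnt_add.
  pose proof (cnt_bounds A (a + n) (m - n)). lra.
Qed.

Lemma cnt_separated (Q : nat -> Prop) (D : nat) :
  (1 <= D)%nat ->
  (forall a b, (a < b)%nat -> Q a -> Q b -> (a + D <= b)%nat) ->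
  forall l s, cnt Q s l * INR D <= INR l + INR D.
Proof.
  intros HD Hsep l. induction l as [l IH] using lt_wf_ind. intro s.
  assert (HDp : 0 < INR D) by (apply lt_0_INR; lia).
  destruct l as [|l]; [simpl; lra|].
  replace (S l) with (1 + l)%nat by lia. rewrite cnt_add. simpl cnt.
  rewrite Rplus_0_l, Nat.add_1_r.
  destruct (classic (Q (S s))) as [Hs|Hs].
  - rewrite ind_true by exact Hs.
    assert (Hgap : forall i, (1 <= i <= D - 1)%nat -> ~ Q (S s + i)%nat).
    { intros i Hi HQ. specialize (Hsep (S s) (S s + i)%nat ltac:(lia) Hs HQ). lia. }
    destruct (le_lt_dec l (D - 1)) as [Hl|Hl].
    + rewrite cnt_eq0 by (intros i Hi; apply Hgap; lia).
      rewrite S_INR. pose proof (pos_INR l). nra.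
    + replace l with ((D - 1) + (l - (D - 1)))%nat by lia.
      rewrite cnt_add, cnt_eq0 by (intros i Hi; apply Hgap; lia).
      specialize (IH (l - (D - 1))%nat ltac:(lia) (S s + (D - 1))%nat).
      rewrite S_INR, plus_INR, !minus_INR in * by lia. simpl INR in *. nra.
  - rewrite ind_false by exact Hs. specialize (IH l ltac:(lia) (S s)).
    rewrite S_INR. nra.
Qed.

Lemma cnt_covered (P Q : nat -> Prop) (K l : nat) (B : R) :
  (forall s, cnt Q s l <= B) ->
  (forall j, P j -> exists i, (1 <= i <= K)%nat /\ Q (j + i)%nat) ->
  forall s, cnt P s l <= INR K * B.
Proof.
  revert P Q. induction K as [|K IH]; intros P Q HB HPQ s.
  - rewrite cnt_eq0; [simpl; lra|].
    intros i _ HP. destruct (HPQ _ HP) as [j [Hj _]]. lia.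
  - set (Q' := fun j => Q (S j)).
    set (P' := fun j => exists i, (1 <= i <= K)%nat /\ Q' (j + i)%nat).
    assert (HQ' : forall s, cnt Q' s l <= B).
    { intro t. rewrite <- (HB (S t)). right. apply cnt_ext. intros; reflexivity. }
    eapply Rle_trans; [apply (cnt_union P Q' P')|].
    + intros j Hj. destruct (HPQ j Hj) as [[|[|i]] [Hi HQ]]; [lia| |].
      * left. unfold Q'. rewrite <- Nat.add_1_r. exact HQ.
      * right. exists (S i). split; [lia|]. unfold Q'.
        replace (S (j + S i)) with (j + S (S i))%nat by lia. exact HQ.
    + pose proof (IH P' Q' HQ' (fun j H => H) s). rewrite S_INR. specialize (HQ' s). lra.
Qed.

Lemma cnt_covered_separated (P Q : nat -> Prop) (K D : nat) :
  (1 <= D)%nat ->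
  (forall a b, (a < b)%nat -> Q a -> Q b -> (a + D <= b)%nat) ->
  (forall j, P j -> exists i, (1 <= i <= K)%nat /\ Q (j + i)%nat) ->
  forall s l, cnt P s l <= INR K * ((INR l + INR D) / INR D).
Proof.
  intros HD Hsep Hcov s l. apply (cnt_covered P Q); auto.
  intro t. apply Rle_div_r; [apply lt_0_INR; lia|]. apply cnt_separated; auto.
Qed.

Definition frequently (P : nat -> Prop) : Prop := forall M, exists n, (M <= n)%nat /\ P n.

Lemma not_frequently (P : nat -> Prop) : ~ frequently P -> eventually (fun n => ~ P n).
Proof.
  intro H. apply not_all_ex_not in H as [M HM]. exists M. intros n Hn HP. apply HM. eauto.
Qed.

Lemma not_eventually (P : nat -> Prop) : ~ eventually P -> frequently (fun n => ~ P n).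
Proof.
  intros H M. apply not_ex_all_not with (n := M) in H.
  apply not_all_ex_not in H as [n Hn]. exists n. tauto.
Qed.

Lemma frequently_eventually (P Q : nat -> Prop) :
  frequently P -> eventually Q -> frequently (fun n => P n /\ Q n).
Proof.
  intros HP [N HQ] M. destruct (HP (M + N)%nat) as [n [Hn Hp]].
  exists n. split; [lia|]. split; auto. apply HQ. lia.
Qed.

Lemma frequently_S (P : nat -> Prop) : frequently P -> frequently (fun m => P (S m)).
Proof.
  intros H M. destruct (H (S M)) as [[|m] [Hm Hp]]; [lia|]. exists m. split; auto. lia.
Qed.

Lemma eventually_S (P : nat -> Prop) : eventually P -> eventually (fun m => P (S m)).
Proof. intros [N HN]. exists N. intros; apply HN; lia. Qed.

Lemma frequently_imp (P Q : nat -> Prop) :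
  (forall n, P n -> Q n) -> frequently P -> frequently Q.
Proof. intros H HP M. destruct (HP M) as [n [Hn Hp]]. eauto. Qed.

Lemma frequently_ratio_absurd (u : nat -> R) d :
  0 < d -> ~ frequently (fun n => d * INR n <= u n /\ u n <= d / 2 * INR n).
Proof.
  intros Hd H. destruct (H 1%nat) as [n [Hn [H1 H2]]].
  pose proof (lt_0_INR n ltac:(lia)). nra.
Qed.

Lemma not_pos_frequently (u : nat -> R) :
  ~ (exists d, 0 < d /\ frequently (fun n => d * INR n <= u n)) ->
  forall d, 0 < d -> eventually (fun n => u n <= d * INR n).
Proof.
  intros H d Hd. apply (filter_imp (fun n => ~ d * INR n <= u n)); [intros; lra|].
  apply not_frequently. intro Hf. eauto.
Qed.

Lemma not_pos_eventually (u : nat -> R) :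
  ~ (exists d, 0 < d /\ eventually (fun n => d * INR n <= u n)) ->
  forall d, 0 < d -> frequently (fun n => u n <= d * INR n).
Proof.
  intros H d Hd M. destruct (not_eventually (fun n => d * INR n <= u n) ltac:(eauto) M)
    as [n [Hn Hu]]. exists n. split; auto. lra.
Qed.

Lemma Rbar_not_pos (x : Rbar) : (forall e, 0 < e -> Rbar_le x e) -> ~ Rbar_lt 0 x.
Proof.
  intros H Hx. destruct x as [x| |]; simpl in *; auto.
  - specialize (H (x / 2) ltac:(lra)). simpl in H. lra.
  - exact (H 1 Rlt_0_1).
Qed.

Lemma LimSup_seq_pos (u : nat -> R) :
  Rbar_lt 0 (LimSup_seq u) <-> exists d, 0 < d /\ frequently (fun n => d <= u n).
Proof.
  unfold LimSup_seq. destruct (ex_LimSup_seq u) as [l Hl]; simpl.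
  split.
  - destruct l as [l| |]; simpl in *; intro Hp; [| |tauto].
    + exists (l / 2). split; [lra|]. intro M.
      destruct (proj1 (Hl (mkposreal (l / 2) ltac:(lra))) M) as [n [Hn Hu]].
      exists n. simpl in Hu. split; auto. lra.
    + exists 1. split; [lra|]. intro M. destruct (Hl 1 M) as [n Hn]. exists n. split; lra || tauto.
  - intros [d [Hd H]]. destruct l as [l| |]; simpl in *; auto.
    + destruct (Rlt_or_le 0 l) as [|Hl0]; auto.
      destruct (proj2 (Hl (mkposreal (d / 2) ltac:(lra)))) as [N HN].
      destruct (H N) as [n [Hn Hu]]. specialize (HN n Hn). simpl in HN. lra.
    + destruct (Hl d) as [N HN]. destruct (H N) as [n [Hn Hu]]. specialize (HN n Hn). lra.
Qed.

Lemma LimInf_seq_pos (u : nat -> R) :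
  Rbar_lt 0 (LimInf_seq u) <-> exists d, 0 < d /\ eventually (fun n => d <= u n).
Proof.
  unfold LimInf_seq. destruct (ex_LimInf_seq u) as [l Hl]; simpl.
  split.
  - destruct l as [l| |]; simpl in *; intro Hp; [| |tauto].
    + exists (l / 2). split; [lra|].
      destruct (proj2 (Hl (mkposreal (l / 2) ltac:(lra)))) as [N HN].
      exists N. intros n Hn. specialize (HN n Hn). simpl in HN. lra.
    + exists 1. split; [lra|]. destruct (Hl 1) as [N HN].
      exists N. intros n Hn. specialize (HN n Hn). lra.
  - intros [d [Hd [N HN]]]. destruct l as [l| |]; simpl in *; auto.
    + destruct (Rlt_or_le 0 l) as [|Hl0]; auto.
      destruct (proj1 (Hl (mkposreal (d / 2) ltac:(lra))) N) as [n [Hn Hu]].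
      specialize (HN n Hn). simpl in Hu. lra.
    + destruct (Hl d N) as [n [Hn Hu]]. specialize (HN n Hn). lra.
Qed.

Lemma le_cnt_ratio A m n d :
  (1 <= n)%nat -> d <= cnt A m n / INR n <-> d * INR n <= cnt A m n.
Proof. intro Hn. symmetry. apply Rle_div_r. apply lt_0_INR. lia. Qed.

Lemma dens_up_pos A :
  Rbar_lt 0 (dens_up A) <-> exists d, 0 < d /\ frequently (fun n => d * INR n <= cnt A 0 n).
Proof.
  unfold dens_up. rewrite LimSup_seq_pos.
  split; intros [d [Hd H]]; exists d; split; auto; intro M;
    destruct (H (S M)) as [n [Hn Hu]]; exists n; split; try lia;
    apply (le_cnt_ratio A 0 n d ltac:(lia)); exact Hu.
Qed.

Lemma dens_low_pos A :
  Rbar_lt 0 (dens_low A) <-> exists d, 0 < d /\ eventually (fun n => d * INR n <= cnt A 0 n).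
Proof.
  unfold dens_low. rewrite LimInf_seq_pos.
  split; intros [d [Hd [N HN]]]; exists d; split; auto; exists (S N); intros n Hn;
    apply (le_cnt_ratio A 0 n d ltac:(lia)); apply HN; lia.
Qed.

Lemma cnt_ratio_bounds A m n : 0 <= cnt A m n / INR n <= 1.
Proof.
  destruct n as [|n]; [simpl; unfold Rdiv; rewrite Rinv_0, Rmult_0_r; lra|].
  pose proof (cnt_bounds A m (S n)). assert (0 < INR (S n)) by (apply lt_0_INR; lia).
  split; [apply Rdiv_le_0_compat; lra|]. apply Rle_div_l; lra.
Qed.

Lemma Sup_seq_bounded (u : nat -> R) : (forall m, 0 <= u m <= 1) ->
  exists s, Sup_seq (fun m => Finite (u m)) = Finite s /\ (forall m, u m <= s) /\
            (forall c, (forall m, u m <= c) -> s <= c).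
Proof.
  intro H. pose proof (Sup_seq_correct (fun m => Finite (u m))) as Hs.
  destruct (Sup_seq (fun m => Finite (u m))) as [s| |]; simpl in Hs.
  - exists s. split; auto. split.
    + intro m. destruct (Rle_or_lt (u m) s); auto.
      pose proof (proj1 (Hs (mkposreal (u m - s) ltac:(lra))) m). simpl in *. lra.
    + intros c Hc. destruct (Rle_or_lt s c); auto.
      destruct (proj2 (Hs (mkposreal (s - c) ltac:(lra)))) as [m Hm]. simpl in Hm.
      specialize (Hc m). lra.
  - destruct (Hs 2) as [m Hm]. specialize (H m). lra.
  - specialize (Hs 0 O). specialize (H O). simpl in Hs. lra.
Qed.

Lemma Inf_seq_bounded (u : nat -> R) : (forall m, 0 <= u m <= 1) ->
  exists s, Inf_seq (fun m => Finite (u m)) = Finite s /\ (forall m, s <= u m) /\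
            (forall c, (forall m, c <= u m) -> c <= s).
Proof.
  intro H. pose proof (Inf_seq_correct (fun m => Finite (u m))) as Hs.
  destruct (Inf_seq (fun m => Finite (u m))) as [s| |]; simpl in Hs.
  - exists s. split; auto. split.
    + intro m. destruct (Rle_or_lt s (u m)); auto.
      pose proof (proj1 (Hs (mkposreal (s - u m) ltac:(lra))) m). simpl in *. lra.
    + intros c Hc. destruct (Rle_or_lt c s); auto.
      destruct (proj2 (Hs (mkposreal (c - s) ltac:(lra)))) as [m Hm]. simpl in Hm.
      specialize (Hc m). lra.
  - specialize (Hs 2 O). specialize (H O). simpl in Hs. lra.
  - destruct (Hs (-1)) as [m Hm]. specialize (H m). lra.
Qed.

Lemma inv_INR_nonneg n : 0 <= / INR n.
Proof.
  destruct n as [|n]; [simpl; rewrite Rinv_0; lra|].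
  apply Rlt_le, Rinv_0_lt_compat, lt_0_INR. lia.
Qed.

Lemma banach_up_le (A B : nat -> Prop) :
  (forall l m, exists m', cnt A m l <= cnt B m' l) -> Rbar_le (banach_up A) (banach_up B).
Proof.
  intro H. apply Lim_seq_le_loc. exists O. intros l _.
  destruct (Sup_seq_bounded (fun m => cnt A m l / INR l) (fun m => cnt_ratio_bounds A m l))
    as [sA [EA [_ HA]]].
  destruct (Sup_seq_bounded (fun m => cnt B m l / INR l) (fun m => cnt_ratio_bounds B m l))
    as [sB [EB [HB _]]].
  rewrite EA, EB. apply HA. intro m. destruct (H l m) as [m' Hm'].
  eapply Rle_trans; [|apply (HB m')]. apply Rmult_le_compat_r; auto. apply inv_INR_nonneg.
Qed.

Lemma banach_up_not_pos (A : nat -> Prop) :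
  (forall e, 0 < e -> eventually (fun l => forall m, cnt A m l <= e * INR l)) ->
  ~ Rbar_lt 0 (banach_up A).
Proof.
  intro H. apply Rbar_not_pos. intros e He. rewrite <- (Lim_seq_const e).
  apply Lim_seq_le_loc. destruct (H e He) as [l0 Hl0]. exists (S l0). intros l Hl.
  destruct (Sup_seq_bounded (fun m => cnt A m l / INR l) (fun m => cnt_ratio_bounds A m l))
    as [sA [EA [_ HA]]].
  rewrite EA. apply HA. intro m. apply Rle_div_l; [apply lt_0_INR; lia|]. apply Hl0. lia.
Qed.

Lemma banach_low_not_pos (A : nat -> Prop) :
  (forall l, exists m, cnt A m l = 0) -> ~ Rbar_lt 0 (banach_low A).
Proof.
  intro H. unfold banach_low. rewrite (Lim_seq_ext _ (fun _ => 0)).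
  { rewrite Lim_seq_const. simpl. lra. }
  intro l.
  destruct (Inf_seq_bounded (fun m => cnt A m l / INR l) (fun m => cnt_ratio_bounds A m l))
    as [s [E [Hs Hglb]]].
  rewrite E. simpl. destruct (H l) as [m Hm]. specialize (Hs m). rewrite Hm in Hs.
  assert (0 <= s) by (apply Hglb; intro; apply cnt_ratio_bounds).
  unfold Rdiv in Hs. rewrite Rmult_0_l in Hs. lra.
Qed.

Lemma dens_low_pos_nonempty A : Rbar_lt 0 (dens_low A) -> exists j, A j.
Proof.
  rewrite dens_low_pos. intros [d [Hd [N HN]]]. apply NNPP. intro Hne.
  specialize (HN (S N) ltac:(lia)). rewrite cnt_eq0 in HN by (intros i _ Hi; eauto).
  pose proof (lt_0_INR (S N) ltac:(lia)). nra.
Qed.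

Lemma dens_up_pos_nonempty A : Rbar_lt 0 (dens_up A) -> exists j, A j.
Proof.
  rewrite dens_up_pos. intros [d [Hd HN]]. apply NNPP. intro Hne.
  destruct (HN 1%nat) as [n [Hn Hd']]. rewrite cnt_eq0 in Hd' by (intros i _ Hi; eauto).
  pose proof (lt_0_INR n ltac:(lia)). nra.
Qed.

Lemma banach_up_pos_nonempty A : Rbar_lt 0 (banach_up A) -> exists j, A j.
Proof.
  intro H. apply NNPP. intro Hne. revert H. apply banach_up_not_pos. intros e He.
  exists O. intros l _ m. rewrite cnt_eq0 by (intros i _ Hi; eauto).
  pose proof (pos_INR l). nra.
Qed.

Lemma eventually_le_INR (x c : R) : 0 < c -> eventually (fun n => x <= c * INR n).
Proof.
  intro Hc. destruct (INR_unbounded (x / c)) as [N HN]. exists N. intros n Hn.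
  apply le_INR in Hn. rewrite Rmult_comm. apply Rle_div_l; lra.
Qed.

Lemma inv_pow2_small (eps : R) : 0 < eps -> exists r, / 2 ^ r < eps.
Proof.
  intro He. destruct (pow_lt_1_zero (/ 2) ltac:(rewrite Rabs_pos_eq; lra) eps He) as [r Hr].
  exists r. specialize (Hr r (le_n r)). rewrite <- pow_inv.
  rewrite Rabs_pos_eq in Hr; auto. apply pow_le. lra.
Qed.

Definition agree (u v : point) (r : nat) : Prop := forall i, (i < r)%nat -> u i = v i.

Lemma dist_term_bounds (u v : point) n :
  0 <= delta (u n) (v n) / 2 ^ S n <= / 2 * (/ 2) ^ n.
Proof.
  assert (0 <= delta (u n) (v n) <= 1) by (unfold delta; destruct (Nat.eqb (u n) (v n)); lra).
  assert (0 < / 2 ^ S n) by (apply Rinv_0_lt_compat, pow_lt; lra).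
  rewrite pow_inv, <- Rinv_mult. change (2 * 2 ^ n) with (2 ^ S n). unfold Rdiv. split; nra.
Qed.

Lemma ex_series_dist (u v : point) : ex_series (fun n => delta (u n) (v n) / 2 ^ S n).
Proof.
  apply (@ex_series_le R_AbsRing R_CompleteNormedModule _ (fun n => / 2 * (/ 2) ^ n)).
  - intro n. pose proof (dist_term_bounds u v n).
    change (Rabs (delta (u n) (v n) / 2 ^ S n) <= / 2 * (/ 2) ^ n).
    rewrite Rabs_pos_eq; lra.
  - apply (@ex_series_scal_l R_AbsRing R_CompleteNormedModule).
    apply ex_series_geom. rewrite Rabs_pos_eq; lra.
Qed.

Lemma dist_le_agree u v r : agree u v r -> Defs.dist u v <= / 2 ^ r.
Proof.
  intro H. unfold Defs.dist.
  rewrite (Series_incr_n_aux _ r).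
  2:{ intros n Hn. rewrite H by auto. unfold delta. rewrite Nat.eqb_refl. unfold Rdiv. ring. }
  eapply Rle_trans.
  - apply (Series_le _ (fun n => / 2 ^ S r * (/ 2) ^ n)).
    + intro n. pose proof (dist_term_bounds u v (r + n)) as [H0 H1]. split; auto.
      eapply Rle_trans; [exact H1|]. right.
      rewrite !pow_inv, <- !Rinv_mult, <- pow_add. reflexivity.
    + apply (@ex_series_scal_l R_AbsRing R_CompleteNormedModule).
      apply ex_series_geom. rewrite Rabs_pos_eq; lra.
  - rewrite Series_scal_l, Series_geom by (rewrite Rabs_pos_eq; lra).
    simpl. rewrite Rinv_mult. right. field. apply pow_nonzero. lra.
Qed.

Lemma agree_of_dist_lt u v r : Defs.dist u v < / 2 ^ r -> agree u v r.
Proof.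
  intros H i Hi. destruct (Nat.eq_dec (u i) (v i)) as [E|E]; auto. exfalso.
  unfold Defs.dist in H.
  rewrite (Series_incr_n _ (S i)) in H by (lia || apply ex_series_dist). simpl pred in H.
  assert (Htail : 0 <= Series (fun n =>
                         delta (u (S i + n)%nat) (v (S i + n)%nat) / 2 ^ S (S i + n))).
  { replace 0 with (Series (fun _ => 0 * 1)) by (rewrite (Series_scal_l 0 (fun _ => 1)); ring).
    apply Series_le.
    - intro n. rewrite Rmult_0_l. split; [lra|]. apply dist_term_bounds.
    - apply (ex_series_incr_n (fun n => delta (u n) (v n) / 2 ^ S n) (S i)), ex_series_dist. }
  assert (Hterm : delta (u i) (v i) / 2 ^ S i <= sum_f_R0 (fun n => delta (u n) (v n) / 2 ^ S n) i).
  { destruct i as [|i]; [simpl; lra|]. rewrite tech5.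
    pose proof (cond_pos_sum (fun n => delta (u n) (v n) / 2 ^ S n) i
                  (fun n => proj1 (dist_term_bounds u v n))). lra. }
  assert (Hd : delta (u i) (v i) = 1) by (unfold delta; apply Nat.eqb_neq in E; rewrite E; auto).
  rewrite Hd in Hterm.
  assert (/ 2 ^ r <= 1 / 2 ^ S i).
  { unfold Rdiv. rewrite Rmult_1_l. apply Rinv_le_contravar; [apply pow_lt; lra|].
    apply Rle_pow; [lra|lia]. }
  lra.
Qed.

(* The paper's N(x, [z_1 ... z_r]), except that it may contain [0]: [cnt] never looks at
   time [0], and [Nset] excludes it. *)
Definition Ncyl (x z : point) (r : nat) : nat -> Prop := fun j => agree (shiftn j x) z r.

Lemma cnt_Ncyl_copy (x x' z : point) r p q n :
  (forall t, (t < n + r)%nat -> x (p + t)%nat = x' (q + t)%nat) ->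
  cnt (Ncyl x z r) p n = cnt (Ncyl x' z r) q n.
Proof.
  intro H. apply cnt_ext. intros i Hi. unfold Ncyl, agree, shiftn.
  split; intros Ha j Hj; rewrite <- Ha by auto; rewrite <- !Nat.add_assoc;
    [symmetry|]; apply H; lia.
Qed.

Definition monotone_density (D : (nat -> Prop) -> Rbar) : Prop :=
  forall A B : nat -> Prop, (forall j, (1 <= j)%nat -> A j -> B j) -> Rbar_le (D A) (D B).

Lemma dens_low_monotone : monotone_density dens_low.
Proof.
  intros A B H. apply LimInf_le. exists O. intros n _.
  apply Rmult_le_compat_r; [apply inv_INR_nonneg|]. apply cnt_le. intros; apply H; auto; lia.
Qed.

Lemma dens_up_monotone : monotone_density dens_up.
Proof.
  intros A B H. apply LimSup_le. exists O. intros n _.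
  apply Rmult_le_compat_r; [apply inv_INR_nonneg|]. apply cnt_le. intros; apply H; auto; lia.
Qed.

Lemma banach_up_monotone : monotone_density banach_up.
Proof.
  intros A B H. apply banach_up_le. intros l m. exists m.
  apply cnt_le. intros; apply H; auto; lia.
Qed.

Lemma Ncyl_of_Nset_ball x z r j : Nset x (Defs.ball z (/ 2 ^ r)) j -> Ncyl x z r j.
Proof. intros [_ H]. exact (agree_of_dist_lt _ _ _ H). Qed.

Lemma Nset_ball_of_Ncyl x z r j :
  (1 <= j)%nat -> Ncyl x z (S r) j -> Nset x (Defs.ball z (/ 2 ^ r)) j.
Proof.
  intros Hj H. split; auto. unfold Defs.ball. eapply Rle_lt_trans; [apply dist_le_agree, H|].
  simpl. rewrite Rinv_mult. pose proof (Rinv_0_lt_compat _ (pow_lt 2 r ltac:(lra))). lra.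
Qed.

Lemma balls_pos_iff_cylinders_pos (D : (nat -> Prop) -> Rbar) x z :
  monotone_density D ->
  (forall eps, 0 < eps -> Rbar_lt 0 (D (Nset x (Defs.ball z eps)))) <->
  (forall r, Rbar_lt 0 (D (Ncyl x z r))).
Proof.
  intro HD. split.
  - intros H r. eapply Rbar_lt_le_trans; [apply (H (/ 2 ^ r))|].
    + apply Rinv_0_lt_compat, pow_lt. lra.
    + apply HD. intros j _. apply Ncyl_of_Nset_ball.
  - intros H eps He. destruct (inv_pow2_small eps He) as [r Hr].
    eapply Rbar_lt_le_trans; [apply (H (S r))|]. apply HD. intros j Hj Hc.
    destruct (Nset_ball_of_Ncyl x z r j Hj Hc) as [H1 H2]. split; auto.
    unfold Defs.ball in *. lra.
Qed.

Lemma Pi_shiftn k L p j : Pi k L p -> Pi k L (shiftn j p).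
Proof.
  intros [H1 H2]. split; [intro n; apply H1|].
  intros n Hn. apply (H2 (j + n)%nat). intros i Hi. specialize (Hn i Hi).
  unfold shiftn in Hn. rewrite <- Nat.add_assoc. exact Hn.
Qed.

Lemma not_Pi_isolated k L z : ~ Pi k L z -> exists r, forall p, Pi k L p -> ~ agree p z r.
Proof.
  intro H. apply not_and_or in H as [H|H].
  - apply not_all_ex_not in H as [n Hn]. exists (S n). intros p [Hp _] Ha.
    apply Hn. rewrite <- (Ha n) by lia. apply Hp.
  - apply not_all_ex_not in H as [n Hn]. apply NNPP in Hn.
    exists (n + L)%nat. intros p [_ Hp] Ha. apply (Hp n). intros j Hj.
    rewrite (Ha (n + j)%nat), (Ha n) by lia. apply Hn; auto.
Qed.

Ltac div_mod t d :=
  pose proof (Nat.div_mod_eq t d); pose proof (Nat.mod_upper_bound t d ltac:(lia)).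

Definition p01 : point := fun t => (t mod 2)%nat.
Definition p0011 : point := fun t => ((t mod 4) / 2)%nat.

Lemma p01_Pi k L : (2 <= k)%nat -> (3 <= L)%nat -> Pi k L p01.
Proof.
  intros Hk HL. split.
  - intro n. unfold p01. pose proof (Nat.mod_upper_bound n 2). lia.
  - intros n H. specialize (H 1%nat ltac:(lia)). unfold p01 in H.
    div_mod (n + 1)%nat 2%nat. div_mod n 2%nat. lia.
Qed.

Lemma p0011_Pi k L : (2 <= k)%nat -> (3 <= L)%nat -> Pi k L p0011.
Proof.
  intros Hk HL. split.
  - intro n. unfold p0011. div_mod n 4%nat. div_mod (n mod 4)%nat 2%nat. lia.
  - intros n H. pose proof (H 1%nat ltac:(lia)). pose proof (H 2%nat ltac:(lia)).
    unfold p0011 in *. div_mod n 4%nat. div_mod (n + 1)%nat 4%nat. div_mod (n + 2)%nat 4%nat.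
    div_mod (n mod 4)%nat 2%nat. div_mod ((n + 1) mod 4)%nat 2%nat.
    div_mod ((n + 2) mod 4)%nat 2%nat. lia.
Qed.

(* [p01] realizes only the 3-words 010 and 101, which [p0011] never realizes. *)
Lemma periodic_Pi_avoiding k L (z : point) : (2 <= k)%nat -> (3 <= L)%nat ->
  exists p, Pi k L p /\ forall i, ~ agree (shiftn i p) z 3.
Proof.
  intros Hk HL.
  destruct (classic ((z 0%nat = 0%nat /\ z 1%nat = 1%nat /\ z 2%nat = 0%nat) \/
                     (z 0%nat = 1%nat /\ z 1%nat = 0%nat /\ z 2%nat = 1%nat))) as [H|H].
  - exists p0011. split; [apply p0011_Pi; auto|]. intros i Ha.
    pose proof (Ha 0%nat ltac:(lia)). pose proof (Ha 1%nat ltac:(lia)).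
    pose proof (Ha 2%nat ltac:(lia)).
    unfold shiftn, p0011 in *. div_mod (i + 0)%nat 4%nat. div_mod (i + 1)%nat 4%nat.
    div_mod (i + 2)%nat 4%nat. div_mod ((i + 0) mod 4)%nat 2%nat.
    div_mod ((i + 1) mod 4)%nat 2%nat. div_mod ((i + 2) mod 4)%nat 2%nat. lia.
  - exists p01. split; [apply p01_Pi; auto|]. intros i Ha. apply H.
    pose proof (Ha 0%nat ltac:(lia)). pose proof (Ha 1%nat ltac:(lia)).
    pose proof (Ha 2%nat ltac:(lia)).
    unfold shiftn, p01 in *. div_mod (i + 0)%nat 2%nat. div_mod (i + 1)%nat 2%nat.
    div_mod (i + 2)%nat 2%nat. lia.
Qed.

Lemma length_rep (w : list nat) n : length (rep w n) = (n * length w)%nat.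
Proof. unfold rep. induction n as [|n IH]; simpl; auto. rewrite length_app, IH. lia. Qed.

Lemma length_Yw y m : length (Yw y m) = m.
Proof. unfold Yw. rewrite length_map, length_seq. reflexivity. Qed.

Lemma nth_rep (w : list nat) n i t : (i < n)%nat -> (t < length w)%nat ->
  nth (i * length w + t) (rep w n) 0%nat = nth t w 0%nat.
Proof.
  unfold rep. revert i. induction n as [|n IH]; intros i Hi Ht; [lia|].
  simpl. destruct i as [|i].
  - simpl. rewrite app_nth1 by lia. reflexivity.
  - rewrite app_nth2 by (simpl; lia).
    replace (S i * length w + t - length w)%nat with (i * length w + t)%nat by (simpl; lia).
    apply IH; lia.
Qed.

Lemma nth_map_seq (p : point) n t : (t < n)%nat -> nth t (map p (seq 0 n)) 0%nat = p t.
Proof.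
  intro H. rewrite nth_indep with (d' := p 0%nat) by (rewrite length_map, length_seq; auto).
  rewrite map_nth, seq_nth by auto. reflexivity.
Qed.

Lemma INR_sqr n : INR (n ^ 2) = INR n * INR n.
Proof. rewrite pow_INR. simpl. ring. Qed.

Lemma one_le_INR_S n : 1 <= INR (S n).
Proof. apply (le_INR 1). lia. Qed.

Section Construction.
Variables (A1 : list nat) (C : nat -> list nat) (y Ty : point).
Hypothesis HTy : forall m, is_prefix (Aseq A1 C y m) Ty.

(* [lenA m], [lenC m], [lenB m] are the lengths of the paper's A_{m+1}, C_{m+1}, B_{m+1};
   the copies of Y_{m+1} inside B_{m+1} have length [m + 1] and the [i]-th one starts
   at position [ypos m i] of [Ty]. *)
Definition lenA m := length (Aseq A1 C y m).
Definition lenC m := length (C (S m)).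
Definition lenB m := (lenC m + S m * lenA m ^ 2)%nat.
Definition ypos m i := (lenA m + lenC m + i * S m)%nat.

Lemma lenA_S m : lenA (S m) = (2 * lenA m + lenB m)%nat.
Proof.
  unfold lenA, lenB, lenC. simpl Aseq. rewrite !length_app, length_rep, length_Yw.
  fold (lenA m). simpl. ring.
Qed.

Lemma lenA_le_ypos m i : (lenA m <= ypos m i)%nat.
Proof. unfold ypos. lia. Qed.

Lemma ypos_last m : ypos m (lenA m ^ 2) = (lenA m + lenB m)%nat.
Proof. unfold ypos, lenB. lia. Qed.

Lemma lenB_ge m : (S m * lenA m ^ 2 <= lenB m)%nat.
Proof. unfold lenB. lia. Qed.

Lemma ypos_locate m N : (ypos m 0 <= N < ypos m (lenA m ^ 2))%nat ->
  exists i, (i < lenA m ^ 2)%nat /\ (ypos m i <= N < ypos m (S i))%nat.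
Proof.
  intro H. set (o := (N - ypos m 0)%nat). exists (o / S m)%nat.
  pose proof (Nat.div_mod_eq o (S m)). pose proof (Nat.mod_upper_bound o (S m) ltac:(lia)).
  unfold ypos in *. split; [|unfold o in *; nia].
  apply Nat.Div0.div_lt_upper_bound. unfold o. lia.
Qed.

Lemma lenA_ge (HA1_nonempty : (1 <= length A1)%nat) m : (S m <= lenA m)%nat.
Proof. induction m as [|m IH]; [exact HA1_nonempty|]. rewrite lenA_S. unfold lenB. lia. Qed.

Lemma lenA_mono m m' : (m <= m')%nat -> (lenA m <= lenA m')%nat.
Proof. induction 1; [lia|]. rewrite lenA_S. lia. Qed.

Lemma Ty_A m j : (j < lenA m)%nat -> Ty j = nth j (Aseq A1 C y m) 0%nat.
Proof. apply HTy. Qed.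

Lemma Ty_C m t : (t < lenC m)%nat -> Ty (lenA m + t)%nat = nth t (C (S m)) 0%nat.
Proof.
  intro H. rewrite (Ty_A (S m)) by (rewrite lenA_S; unfold lenB; lia).
  simpl Aseq. rewrite app_nth2 by (fold (lenA m); lia). fold (lenA m).
  replace (lenA m + t - lenA m)%nat with t by lia.
  rewrite app_nth1 by (rewrite length_app; unfold lenC in H; lia).
  apply app_nth1. exact H.
Qed.

Lemma Ty_Y m i t : (i < lenA m ^ 2)%nat -> (t < S m)%nat -> Ty (ypos m i + t)%nat = y t.
Proof.
  intros Hi Ht. unfold ypos.
  assert (Hb : (i * S m + t < lenA m ^ 2 * S m)%nat) by nia.
  rewrite (Ty_A (S m)) by (rewrite lenA_S; unfold lenB; lia).
  simpl Aseq. rewrite app_nth2 by (fold (lenA m); lia). fold (lenA m).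
  rewrite app_nth1
    by (rewrite length_app, length_rep, length_Yw; unfold lenC; simpl Nat.pow in *; lia).
  rewrite app_nth2 by (unfold lenC; lia). fold (lenC m).
  replace (lenA m + lenC m + i * S m + t - lenA m - lenC m)%nat with (i * S m + t)%nat by lia.
  rewrite <- (length_Yw y (S m)) at 1. rewrite nth_rep by (rewrite ?length_Yw; auto).
  apply nth_map_seq. exact Ht.
Qed.

Lemma Ty_A_again m t : (t < lenA m)%nat -> Ty (lenA m + lenB m + t)%nat = Ty t.
Proof.
  intro Ht. rewrite (Ty_A (S m)) by (rewrite lenA_S; lia). rewrite (Ty_A m) by exact Ht.
  simpl Aseq. rewrite app_nth2 by (fold (lenA m); lia). fold (lenA m).
  rewrite app_nth2
    by (rewrite length_app, length_rep, length_Yw; unfold lenB, lenC; simpl Nat.pow in *; lia).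
  rewrite length_app, length_rep, length_Yw. f_equal. unfold lenB, lenC. simpl Nat.pow. lia.
Qed.

Lemma covering_bound_le (A s l r : R) : 1 <= s <= A -> 0 <= l -> 0 <= r ->
  A * ((l + (A + A * A)) / (A + A * A)) + r * ((l + s) / s) <= (1 + r) * l / s + A + r.
Proof.
  intros Hs Hl Hr.
  replace (A * ((l + (A + A * A)) / (A + A * A))) with (l / (1 + A) + A) by (field; nra).
  replace (r * ((l + s) / s)) with (r * l / s + r) by (field; lra).
  replace ((1 + r) * l / s) with (l / s + r * l / s) by (field; lra).
  assert (l / (1 + A) <= l / s).
  { apply Rmult_le_compat_l; auto. apply Rinv_le_contravar; lra. }
  lra.
Qed.

Section OutsidePi.
Variables (k L : nat).
Hypothesis HA1_nonempty : (1 <= length A1)%nat.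
Hypothesis Hy : Pi k L y.
Hypothesis HC : forall n, (1 <= n)%nat -> contained (Pi k L) (C n).
Variables (z : point) (r : nat).
Hypothesis Hz : forall p, Pi k L p -> ~ agree p z r.

Lemma hit_not_in_C m t : (t + r <= lenC m)%nat -> ~ Ncyl Ty z r (lenA m + t).
Proof.
  intros Ht Hc. destruct (HC (S m) ltac:(lia)) as [p [Hp Hpre]].
  apply (Hz (shiftn t p) (Pi_shiftn k L p t Hp)). intros i Hi.
  rewrite <- (Hc i Hi). unfold shiftn. rewrite <- Nat.add_assoc, Ty_C by lia.
  apply Hpre. unfold lenC in Ht. lia.
Qed.

Lemma hit_not_in_Y m i t : (i < lenA m ^ 2)%nat -> (t + r <= S m)%nat ->
  ~ Ncyl Ty z r (ypos m i + t).
Proof.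
  intros Hi Ht Hc. apply (Hz (shiftn t y) (Pi_shiftn k L y t Hy)). intros i' Hi'.
  rewrite <- (Hc i' Hi'). unfold shiftn. rewrite <- Nat.add_assoc, Ty_Y by lia.
  reflexivity.
Qed.

(* C_{m+1} and the copies of Y_{m+1} are words of Pi_L, so a window seeing [z]
   cannot lie inside one of them. *)
Lemma hit_in_B_crosses_ypos m j : (lenA m <= j < lenA m + lenB m)%nat -> Ncyl Ty z r j ->
  exists i, (i <= lenA m ^ 2)%nat /\ (j < ypos m i <= j + r)%nat.
Proof.
  intros Hj Hc. apply NNPP. intro Hno.
  assert (Hout : forall i, (i <= lenA m ^ 2)%nat -> (j < ypos m i)%nat -> (j + r < ypos m i)%nat).
  { intros i Hi Hlt. apply not_ge. intro Hge. apply Hno. exists i. split; [exact Hi|lia]. }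
  pose proof (ypos_last m).
  destruct (lt_dec j (ypos m 0)) as [HC0|HC0].
  - apply (hit_not_in_C m (j - lenA m)).
    + pose proof (Hout 0%nat ltac:(lia) HC0). unfold ypos in *. lia.
    + replace (lenA m + (j - lenA m))%nat with j by lia. exact Hc.
  - destruct (ypos_locate m j ltac:(lia)) as [i [Hi Hij]].
    pose proof (Hout (S i) ltac:(lia) ltac:(lia)).
    apply (hit_not_in_Y m i (j - ypos m i) Hi); [unfold ypos in *; lia|].
    replace (ypos m i + (j - ypos m i))%nat with j by lia. exact Hc.
Qed.

Section Level.
Variable n : nat.
Hypothesis Hrn : (r <= lenA n)%nat.

(* [A_end d e]: [e] is the right end of one of the copies of A_{n+1} in A_{n+d+1};
   [seam d b]: [b] is [ypos (n + d') i] for some [d' < d] and [i <= lenA (n + d') ^ 2],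
   or a translate of one into the second copy of some A_{n+d'+1}. *)
Fixpoint A_end (d e : nat) : Prop :=
  match d with
  | O => e = lenA n
  | S d' => A_end d' e \/ exists e', A_end d' e' /\ e = (e' + lenA (n + d') + lenB (n + d'))%nat
  end.

Fixpoint seam (d b : nat) : Prop :=
  match d with
  | O => False
  | S d' => seam d' b \/
      (exists i, (i <= lenA (n + d') ^ 2)%nat /\ b = ypos (n + d') i) \/
      (exists b', seam d' b' /\ b = (b' + lenA (n + d') + lenB (n + d'))%nat)
  end.

Lemma lenA_add_S d : lenA (n + S d) = (2 * lenA (n + d) + lenB (n + d))%nat.
Proof. rewrite Nat.add_succ_r. apply lenA_S. Qed.

Lemma lenA_le_add d : (lenA n <= lenA (n + d))%nat.
Proof. apply lenA_mono. lia. Qed.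

Lemma A_end_bounds d e : A_end d e -> (lenA n <= e <= lenA (n + d))%nat.
Proof.
  revert e. induction d as [|d IH]; simpl; intros e H.
  - rewrite Nat.add_0_r. lia.
  - rewrite lenA_add_S. destruct H as [H|[e' [H ->]]]; apply IH in H; lia.
Qed.

Lemma A_end_last d : A_end d (lenA (n + d)).
Proof.
  induction d as [|d IH]; simpl; [rewrite Nat.add_0_r; reflexivity|].
  right. exists (lenA (n + d)). split; auto. rewrite lenA_add_S. lia.
Qed.

Lemma seam_bounds d b : seam d b -> (lenA n <= b /\ b + lenA n <= lenA (n + d))%nat.
Proof.
  revert b. induction d as [|d IH]; simpl; intros b H; [contradiction|].
  rewrite lenA_add_S. pose proof (lenA_le_add d). pose proof (lenB_ge (n + d)).
  destruct H as [H|[[i [Hi ->]]|[b' [H ->]]]]; try (apply IH in H; lia).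
  assert (i * S (n + d) <= lenA (n + d) ^ 2 * S (n + d))%nat by (apply Nat.mul_le_mono_r; auto).
  unfold ypos, lenB in *. lia.
Qed.

Lemma A_end_separated d a b : (a < b)%nat -> A_end d a -> A_end d b ->
  (a + (lenA n + lenA n ^ 2) <= b)%nat.
Proof.
  revert a b. induction d as [|d IH]; intros a b Hab Ha Hb; simpl in Ha, Hb; [lia|].
  assert (lenA n ^ 2 <= lenB (n + d))%nat.
  { pose proof (lenA_le_add d). pose proof (lenB_ge (n + d)). simpl Nat.pow in *. nia. }
  destruct Ha as [Ha|[a' [Ha ->]]]; destruct Hb as [Hb|[b' [Hb ->]]].
  - auto.
  - apply A_end_bounds in Ha. apply A_end_bounds in Hb. lia.
  - apply A_end_bounds in Ha. apply A_end_bounds in Hb. lia.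
  - specialize (IH a' b' ltac:(lia) Ha Hb). lia.
Qed.

Lemma seam_separated d a b : (a < b)%nat -> seam d a -> seam d b -> (a + S n <= b)%nat.
Proof.
  revert a b. induction d as [|d IH]; intros a b Hab Ha Hb; simpl in Ha, Hb; [contradiction|].
  pose proof (lenA_le_add d). pose proof (lenA_ge HA1_nonempty n).
  assert (Hlast : forall i, (i <= lenA (n + d) ^ 2)%nat ->
            (lenA (n + d) <= ypos (n + d) i <= lenA (n + d) + lenB (n + d))%nat).
  { intros i Hi. assert (i * S (n + d) <= lenA (n + d) ^ 2 * S (n + d))%nat
      by (apply Nat.mul_le_mono_r; auto). unfold ypos, lenB in *. lia. }
  destruct Ha as [Ha|[[i1 [Hi1 ->]]|[a' [Ha ->]]]];
  destruct Hb as [Hb|[[i2 [Hi2 ->]]|[b' [Hb ->]]]].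
  - apply IH; auto.
  - apply seam_bounds in Ha. pose proof (Hlast i2 Hi2). lia.
  - apply seam_bounds in Ha. apply seam_bounds in Hb. lia.
  - apply seam_bounds in Hb. pose proof (Hlast i1 Hi1). lia.
  - unfold ypos in *. assert (i1 < i2)%nat by nia. nia.
  - apply seam_bounds in Hb. pose proof (Hlast i1 Hi1). lia.
  - apply seam_bounds in Ha. apply seam_bounds in Hb. lia.
  - apply seam_bounds in Ha. pose proof (Hlast i2 Hi2). lia.
  - specialize (IH a' b' ltac:(lia) Ha Hb). lia.
Qed.

Definition near_A_end (d j : nat) : Prop :=
  exists i, (1 <= i <= lenA n)%nat /\ A_end d (j + i)%nat.
Definition near_seam (d j : nat) : Prop :=
  exists i, (1 <= i <= r)%nat /\ seam d (j + i)%nat.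
Definition near_boundary (d j : nat) : Prop := near_A_end d j \/ near_seam d j.

Lemma near_boundary_S d j : near_boundary d j -> near_boundary (S d) j.
Proof.
  intros [[i [Hi H]]|[i [Hi H]]]; [left|right]; exists i; split; auto; simpl; auto.
Qed.

Lemma near_boundary_shift d j :
  near_boundary d j -> near_boundary (S d) (j + lenA (n + d) + lenB (n + d)).
Proof.
  intros [[i [Hi H]]|[i [Hi H]]]; [left|right]; exists i; split; auto; simpl.
  - right. exists (j + i)%nat. split; auto. lia.
  - right. right. exists (j + i)%nat. split; auto. lia.
Qed.

Lemma hit_near_boundary d j : (j < lenA (n + d))%nat ->
  (lenA (n + d) < j + r)%nat \/ Ncyl Ty z r j -> near_boundary d j.
Proof.
  revert j. induction d as [|d IH]; intros j Hj Hhit.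
  - left. exists (lenA n - j)%nat. rewrite Nat.add_0_r in Hj. split; [lia|]. simpl. lia.
  - rewrite lenA_add_S in Hj, Hhit. pose proof (lenA_le_add d).
    set (m := (n + d)%nat) in *.
    destruct (lt_dec j (lenA m)) as [H1|H1]; [|destruct (lt_dec j (lenA m + lenB m)) as [H3|H3]].
    + destruct (le_lt_dec (j + r) (lenA m)) as [H2|H2].
      * apply near_boundary_S, IH; [exact H1|]. destruct Hhit as [Hh|Hh]; [lia|auto].
      * left. exists (lenA m - j)%nat. split; [lia|]. simpl. left.
        replace (j + (lenA m - j))%nat with (lenA (n + d)) by (unfold m in *; lia).
        apply A_end_last.
    + destruct Hhit as [Hh|Hh]; [lia|].
      destruct (hit_in_B_crosses_ypos m j ltac:(lia) Hh) as [i [Hi Hji]].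
      right. exists (ypos m i - j)%nat. split; [lia|]. simpl. right. left.
      exists i. split; [exact Hi|]. unfold m in *. lia.
    + set (j' := (j - lenA m - lenB m)%nat).
      replace j with (j' + lenA m + lenB m)%nat by (unfold j'; lia).
      apply near_boundary_shift, IH; [unfold j', m in *; lia|].
      destruct (le_lt_dec (j' + r) (lenA m)) as [H5|H5]; [|left; unfold m in *; lia].
      destruct Hhit as [Hh|Hh]; [left; unfold j', m in *; lia|].
      right. intros i Hi. rewrite <- (Hh i Hi). unfold shiftn.
      replace (j + i)%nat with (lenA m + lenB m + (j' + i))%nat by (unfold j'; lia).
      rewrite Ty_A_again by (unfold j' in *; lia). reflexivity.
Qed.

Lemma cnt_hits_le s l : cnt (Ncyl Ty z r) s l <=
  INR (lenA n) * ((INR l + INR (lenA n + lenA n ^ 2)) / INR (lenA n + lenA n ^ 2)) +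
  INR r * ((INR l + INR (S n)) / INR (S n)).
Proof.
  set (d := (s + l)%nat). pose proof (lenA_ge HA1_nonempty (n + d)).
  eapply Rle_trans; [apply (cnt_le _ (fun j => (j <= d)%nat /\ Ncyl Ty z r j) s s)|].
  { intros i Hi Hc. split; auto. unfold d. lia. }
  eapply Rle_trans; [apply (cnt_union _ (near_A_end d) (near_seam d))|].
  { intros j [Hj Hc]. apply hit_near_boundary; auto. lia. }
  pose proof (lenA_ge HA1_nonempty n).
  apply Rplus_le_compat; eapply cnt_covered_separated; eauto; try lia.
  - apply A_end_separated.
  - apply seam_separated.
Qed.

End Level.

Lemma banach_up_Ncyl_outside_Pi : ~ Rbar_lt 0 (banach_up (Ncyl Ty z r)).
Proof.
  apply banach_up_not_pos. intros e He.
  destruct (eventually_le_INR (1 + INR r) (e / 2) ltac:(lra)) as [N HN].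
  set (n := (N + r)%nat). pose proof (lenA_ge HA1_nonempty n) as Hn.
  destruct (eventually_le_INR (INR (lenA n) + INR r) (e / 2) ltac:(lra)) as [l0 Hl0].
  exists l0. intros l Hl m.
  pose proof (cnt_hits_le n ltac:(unfold n in *; lia) m l) as Hw.
  rewrite plus_INR, pow_INR in Hw. simpl pow in Hw. rewrite Rmult_1_r in Hw.
  eapply Rle_trans; [apply Hw|]. eapply Rle_trans; [apply covering_bound_le|].
  - split; [apply (le_INR 1); lia|apply le_INR; lia].
  - apply pos_INR.
  - apply pos_INR.
  - specialize (HN (S n) ltac:(unfold n; lia)). specialize (Hl0 l Hl).
    assert (0 < INR (S n)) by (apply lt_0_INR; lia). pose proof (pos_INR l).
    assert ((1 + INR r) * INR l / INR (S n) <= e / 2 * INR l).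
    { apply Rle_div_l; [lra|]. nra. }
    lra.
Qed.

End OutsidePi.

Section DensityTransfer.
Hypothesis HA1_nonempty : (1 <= length A1)%nat.
Hypothesis HC_small :
  forall eps, 0 < eps -> eventually (fun m => INR (lenC m) <= eps * INR (lenA m)).
Variables (z : point) (r : nat).

Definition visits_y N := cnt (Ncyl y z r) 0 N.
Definition visits_T N := cnt (Ncyl Ty z r) 0 N.

Lemma visits_T_add N d : visits_T (N + d) = visits_T N + cnt (Ncyl Ty z r) N d.
Proof. apply cnt_add. Qed.

Lemma visits_T_mono N N' : (N <= N')%nat -> visits_T N <= visits_T N'.
Proof. apply cnt_le_length. Qed.

Lemma cnt_Yblock m i : (i < lenA m ^ 2)%nat ->
  visits_y (S m) - INR r <= cnt (Ncyl Ty z r) (ypos m i) (S m) <= visits_y (S m) + INR r.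
Proof.
  intro Hi. unfold visits_y.
  pose proof (cnt_bounds (Ncyl y z r) 0 (S m)).
  pose proof (cnt_bounds (Ncyl Ty z r) (ypos m i) (S m)).
  destruct (le_lt_dec r (S m)) as [Hr|Hr]; [|apply lt_INR in Hr; split; lra].
  assert (Hsplit : forall x p, cnt (Ncyl x z r) p (S m) =
            cnt (Ncyl x z r) p (S m - r) + cnt (Ncyl x z r) (p + (S m - r)) r)
    by (intros; rewrite <- cnt_add; f_equal; lia).
  rewrite !Hsplit, (cnt_Ncyl_copy Ty y z r (ypos m i) 0 (S m - r)).
  - pose proof (cnt_bounds (Ncyl Ty z r) (ypos m i + (S m - r)) r).
    pose proof (cnt_bounds (Ncyl y z r) (0 + (S m - r)) r). lra.
  - intros t Ht. apply Ty_Y; auto. lia.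
Qed.

Lemma visits_T_Yblocks m i : (i <= lenA m ^ 2)%nat ->
  INR i * (visits_y (S m) - INR r) <= visits_T (ypos m i) - visits_T (ypos m 0) <=
  INR i * (visits_y (S m) + INR r).
Proof.
  induction i as [|i IH]; intro Hi; [simpl; lra|].
  replace (ypos m (S i)) with (ypos m i + S m)%nat by (unfold ypos; lia).
  rewrite visits_T_add, S_INR. pose proof (cnt_Yblock m i ltac:(lia)).
  specialize (IH ltac:(lia)). lra.
Qed.

Lemma visits_T_C m : visits_T (lenA m) <= visits_T (ypos m 0) <= visits_T (lenA m) + INR (lenC m).
Proof.
  replace (ypos m 0) with (lenA m + lenC m)%nat by (unfold ypos; lia).
  rewrite visits_T_add. pose proof (cnt_bounds (Ncyl Ty z r) (lenA m) (lenC m)). lra.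
Qed.

Lemma visits_T_A_again m : visits_T (lenA (S m)) <= visits_T (ypos m (lenA m ^ 2)) + INR (lenA m).
Proof.
  rewrite lenA_S, ypos_last.
  replace (2 * lenA m + lenB m)%nat with (lenA m + lenB m + lenA m)%nat by lia.
  rewrite visits_T_add. pose proof (cnt_bounds (Ncyl Ty z r) (lenA m + lenB m) (lenA m)). lra.
Qed.

Lemma INR_lenA_S m : INR (lenA (S m)) =
  2 * INR (lenA m) + INR (lenC m) + INR (S m) * (INR (lenA m) * INR (lenA m)).
Proof. rewrite lenA_S. unfold lenB. rewrite !plus_INR, !mult_INR, pow_INR. simpl. ring. Qed.

Lemma INR_ypos m i : INR (ypos m i) = INR (lenA m) + INR (lenC m) + INR i * INR (S m).
Proof. unfold ypos. rewrite !plus_INR, mult_INR. reflexivity. Qed.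

Lemma one_le_lenA m : 1 <= INR (lenA m).
Proof. apply (le_INR 1). pose proof (lenA_ge HA1_nonempty m). lia. Qed.

Definition thin m δ : Prop :=
  INR (lenC m) <= δ * INR (lenA m) /\ visits_y (S m) + INR r + 1 <= δ * INR (S m).
Definition thick m δ : Prop :=
  (lenC m <= lenA m)%nat /\ δ * INR (S m) <= visits_y (S m) - INR r.

Lemma visits_T_level_end_le m δ : thin m δ -> visits_T (lenA (S m)) <= 4 * δ * INR (lenA (S m)).
Proof.
  intros [Hc Hf].
  pose proof (visits_T_A_again m). pose proof (visits_T_C m) as [_ HC0].
  pose proof (proj2 (visits_T_Yblocks m (lenA m ^ 2) (le_n _))) as HY.
  pose proof (cnt_bounds (Ncyl Ty z r) 0 (lenA m)) as [_ HA].
  pose proof (cnt_bounds (Ncyl y z r) 0 (S m)) as [Hf0 _].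
  pose proof (pos_INR r). pose proof (pos_INR (lenC m)).
  pose proof (one_le_lenA m). pose proof (one_le_INR_S m).
  rewrite INR_sqr in HY. rewrite INR_lenA_S. unfold visits_y, visits_T in *.
  set (a := INR (lenA m)) in *. set (s := INR (S m)) in *. set (c := INR (lenC m)) in *.
  set (f := cnt (Ncyl y z r) 0 (S m)) in *.
  assert (a * a * (f + INR r) <= a * a * (δ * s - 1)) by (apply Rmult_le_compat_l; nra).
  assert (a * a <= δ * s * (a * a))
    by (rewrite <- (Rmult_1_l (a * a)) at 1; apply Rmult_le_compat_r; nra).
  assert (Hδ : 0 < δ) by nra.
  assert (a <= s * (a * a)) by nra.
  assert (c <= δ * s * (a * a)) by nra.
  assert (a <= a * a) by nra.
  assert (0 <= δ * a /\ 0 <= δ * c) as [] by (split; apply Rmult_le_pos; lra).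
  lra.
Qed.

Lemma visits_T_level_end_ge m δ :
  0 < δ -> thick m δ -> δ / 4 * INR (lenA (S m)) <= visits_T (lenA (S m)).
Proof.
  intros Hδ [Hc Hf].
  assert (Hmono : visits_T (ypos m (lenA m ^ 2)) <= visits_T (lenA (S m)))
    by (apply visits_T_mono; rewrite ypos_last, lenA_S; lia).
  pose proof (visits_T_C m) as [HC0 _].
  pose proof (proj1 (visits_T_Yblocks m (lenA m ^ 2) (le_n _))) as HY.
  pose proof (cnt_bounds (Ncyl Ty z r) 0 (lenA m)) as [HA _].
  pose proof (one_le_lenA m). pose proof (one_le_INR_S m).
  apply le_INR in Hc. rewrite INR_sqr in HY. rewrite INR_lenA_S. unfold visits_y, visits_T in *.
  set (a := INR (lenA m)) in *. set (s := INR (S m)) in *. set (c := INR (lenC m)) in *.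
  assert (a * a * (δ * s) <= a * a * (cnt (Ncyl y z r) 0 (S m) - INR r))
    by (apply Rmult_le_compat_l; nra).
  assert (2 * a + c <= 3 * (s * (a * a))) by nra.
  nra.
Qed.

Lemma lenA_locate m0 N : (lenA m0 <= N)%nat ->
  exists m, (m0 <= m)%nat /\ (lenA m <= N <= lenA (S m))%nat.
Proof.
  intro H. pose proof (lenA_ge HA1_nonempty (m0 + N)).
  assert (Hex : exists d, (N < lenA (m0 + d))%nat) by (exists N; lia).
  destruct Hex as [d Hd]. induction d as [|d IH]; [rewrite Nat.add_0_r in Hd; lia|].
  destruct (lt_dec N (lenA (m0 + d))) as [H'|H']; auto.
  exists (m0 + d)%nat. split; [lia|]. rewrite <- Nat.add_succ_r. lia.
Qed.

(* Consecutive grid points are at most a factor 2 apart (when |C_{m+1}| <= |A_{m+1}|), so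
   the monotone counts [visits_T] inherit linear bounds from the grid at all times. *)
Definition grid m t : Prop :=
  t = lenA m \/ t = lenA (S m) \/ exists i, (i <= lenA m ^ 2)%nat /\ t = ypos m i.

Lemma grid_below m N : (lenC m <= lenA m)%nat -> (lenA m <= N <= lenA (S m))%nat ->
  exists t, grid m t /\ (t <= N <= 2 * t)%nat.
Proof.
  intros Hc HN. pose proof (lenA_ge HA1_nonempty m). rewrite lenA_S in HN.
  pose proof (ypos_last m).
  destruct (lt_dec N (ypos m 0)) as [HP0|HP0].
  { exists (lenA m). split; [left; auto|]. unfold ypos in HP0. lia. }
  destruct (lt_dec N (ypos m (lenA m ^ 2))) as [HQ|HQ].
  - destruct (ypos_locate m N ltac:(lia)) as [i [Hi HiN]].
    exists (ypos m i). split; [right; right; exists i; split; auto; lia|].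
    unfold ypos in *. lia.
  - exists (ypos m (lenA m ^ 2)). split; [right; right; eauto|]. lia.
Qed.

Lemma grid_above m N : (lenC m <= lenA m)%nat -> (lenA m <= N <= lenA (S m))%nat ->
  exists t, grid m t /\ (N <= t <= 2 * N)%nat.
Proof.
  intros Hc HN. pose proof (lenA_ge HA1_nonempty m). rewrite lenA_S in HN.
  pose proof (ypos_last m).
  destruct (lt_dec N (ypos m 0)) as [HP0|HP0].
  { exists (ypos m 0). split; [right; right; exists 0%nat; split; auto; lia|].
    unfold ypos in *. lia. }
  destruct (lt_dec N (ypos m (lenA m ^ 2))) as [HQ|HQ].
  - destruct (ypos_locate m N ltac:(lia)) as [i [Hi HiN]].
    exists (ypos m (S i)). split; [right; right; exists (S i); split; auto; lia|].
    unfold ypos in *. lia.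
  - exists (lenA (S m)). split; [right; left; auto|]. rewrite lenA_S. lia.
Qed.

Lemma thin_pos m δ : thin m δ -> 0 < δ.
Proof.
  intros [_ Hf]. pose proof (cnt_bounds (Ncyl y z r) 0 (S m)). pose proof (pos_INR r).
  pose proof (one_le_INR_S m). unfold visits_y in Hf. nra.
Qed.

Lemma visits_T_grid_le m δ : thin m δ -> visits_T (lenA m) <= 4 * δ * INR (lenA m) ->
  forall t, grid m t -> visits_T t <= 5 * δ * INR t.
Proof.
  intros Hthin HA t Ht. pose proof (thin_pos m δ Hthin) as Hδ.
  pose proof (pos_INR t). assert (0 <= δ * INR t) by (apply Rmult_le_pos; lra).
  destruct Ht as [->|[->|[i [Hi ->]]]].
  - lra.
  - pose proof (visits_T_level_end_le m δ Hthin). lra.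
  - destruct Hthin as [Hc Hf]. pose proof (proj2 (visits_T_Yblocks m i Hi)).
    pose proof (visits_T_C m) as [_ HC0]. rewrite INR_ypos in *.
    pose proof (pos_INR i). pose proof (pos_INR r). pose proof (pos_INR (lenC m)).
    assert (INR i * (visits_y (S m) + INR r) <= INR i * (δ * INR (S m)))
      by (apply Rmult_le_compat_l; lra).
    assert (0 <= δ * INR (lenC m)) by (apply Rmult_le_pos; lra).
    assert (0 <= δ * (INR i * INR (S m)))
      by (apply Rmult_le_pos; [lra|apply Rmult_le_pos, pos_INR; lra]).
    lra.
Qed.

Lemma visits_T_grid_ge m δ : 0 < δ -> thick m δ -> δ / 4 * INR (lenA m) <= visits_T (lenA m) ->
  forall t, grid m t -> δ / 8 * INR t <= visits_T t.
Proof.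
  intros Hδ Hthick HA t Ht. pose proof (pos_INR t).
  assert (0 <= δ * INR t) by (apply Rmult_le_pos; lra).
  destruct Ht as [->|[->|[i [Hi ->]]]].
  - lra.
  - pose proof (visits_T_level_end_ge m δ Hδ Hthick). lra.
  - destruct Hthick as [Hc Hf]. apply le_INR in Hc.
    pose proof (proj1 (visits_T_Yblocks m i Hi)). pose proof (visits_T_C m) as [HC0 _].
    rewrite INR_ypos in *. pose proof (pos_INR i).
    assert (INR i * (δ * INR (S m)) <= INR i * (visits_y (S m) - INR r))
      by (apply Rmult_le_compat_l; lra).
    assert (0 <= δ * (INR i * INR (S m)))
      by (apply Rmult_le_pos; [lra|apply Rmult_le_pos, pos_INR; lra]).
    assert (δ * INR (lenC m) <= δ * INR (lenA m)) by (apply Rmult_le_compat_l; lra).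
    lra.
Qed.

Lemma visits_T_eventually_le δ : 0 < δ <= 1 -> eventually (fun m => thin m δ) ->
  eventually (fun N => visits_T N <= 10 * δ * INR N).
Proof.
  intros Hδ [m0 H]. exists (lenA (S m0)). intros N HN.
  destruct (lenA_locate (S m0) N HN) as [[|m] [Hm HmN]]; [lia|].
  pose proof (H (S m) ltac:(lia)) as Hthin.
  assert (Hc : (lenC (S m) <= lenA (S m))%nat).
  { apply INR_le. destruct Hthin as [Hc _]. pose proof (pos_INR (lenA (S m))). nra. }
  destruct (grid_above (S m) N Hc HmN) as [t [Ht HNt]].
  pose proof (visits_T_grid_le (S m) δ Hthin (visits_T_level_end_le m δ (H m ltac:(lia))) t Ht).
  pose proof (visits_T_mono N t ltac:(lia)).
  assert (INR t <= 2 * INR N) by (rewrite <- (mult_INR 2); apply le_INR; lia).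
  nra.
Qed.

Lemma visits_T_eventually_ge δ : 0 < δ -> eventually (fun m => thick m δ) ->
  eventually (fun N => δ / 16 * INR N <= visits_T N).
Proof.
  intros Hδ [m0 H]. exists (lenA (S m0)). intros N HN.
  destruct (lenA_locate (S m0) N HN) as [[|m] [Hm HmN]]; [lia|].
  pose proof (H (S m) ltac:(lia)) as Hthick.
  destruct (grid_below (S m) N (proj1 Hthick) HmN) as [t [Ht HNt]].
  pose proof (visits_T_grid_ge (S m) δ Hδ Hthick
                (visits_T_level_end_ge m δ Hδ (H m ltac:(lia))) t Ht).
  pose proof (visits_T_mono t N ltac:(lia)).
  assert (INR N <= 2 * INR t) by (rewrite <- (mult_INR 2); apply le_INR; lia).
  nra.
Qed.

Definition small_level m eps : Prop :=
  (lenC m <= lenA m)%nat /\ INR (lenC m) <= eps * INR (lenA m) /\ INR r + 1 <= eps * INR (S m).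

Lemma eventually_small_level eps : 0 < eps -> eventually (fun m => small_level m eps).
Proof.
  intro He. apply filter_and; [|apply filter_and].
  - eapply filter_imp; [|apply (HC_small 1 Rlt_0_1)]. intros m Hm. apply INR_le. lra.
  - apply HC_small, He.
  - apply (eventually_S (fun n => INR r + 1 <= eps * INR n)), eventually_le_INR, He.
Qed.

Lemma thin_of_small m δ :
  small_level m (δ / 2) -> visits_y (S m) <= δ / 2 * INR (S m) -> thin m δ.
Proof.
  intros (_ & Hc & Hr) Hf. pose proof (pos_INR (lenC m)). pose proof (pos_INR (lenA m)).
  split; [nra|lra].
Qed.

Lemma thick_of_small m d :
  small_level m (d / 2) -> d * INR (S m) <= visits_y (S m) -> thick m (d / 2).
Proof. intros (Hc & _ & Hr) Hf. split; [exact Hc|lra]. Qed.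

Lemma frequently_lenA (P : nat -> Prop) : frequently (fun m => P (lenA (S m))) -> frequently P.
Proof.
  intros H M. destruct (H M) as [m [Hm HP]]. exists (lenA (S m)). split; auto.
  pose proof (lenA_ge HA1_nonempty (S m)). lia.
Qed.

Lemma eventually_thin δ : 0 < δ ->
  eventually (fun n => visits_y n <= δ / 2 * INR n) -> eventually (fun m => thin m δ).
Proof.
  intros Hδ H.
  pose proof (filter_and (F := eventually) _ _ (eventually_small_level (δ / 2) ltac:(lra))
                (eventually_S (fun n => visits_y n <= δ / 2 * INR n) H)) as HE.
  eapply filter_imp; [|exact HE]. intros m [Hs Hf]. exact (thin_of_small m δ Hs Hf).
Qed.

Lemma frequently_thin δ : 0 < δ ->
  frequently (fun n => visits_y n <= δ / 2 * INR n) -> frequently (fun m => thin m δ).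
Proof.
  intros Hδ H.
  pose proof (frequently_eventually _ _ (frequently_S (fun n => visits_y n <= δ / 2 * INR n) H)
                (eventually_small_level (δ / 2) ltac:(lra))) as HF.
  eapply frequently_imp; [|exact HF]. intros m [Hf Hs]. exact (thin_of_small m δ Hs Hf).
Qed.

Lemma eventually_thick d : 0 < d ->
  eventually (fun n => d * INR n <= visits_y n) -> eventually (fun m => thick m (d / 2)).
Proof.
  intros Hd H.
  pose proof (filter_and (F := eventually) _ _ (eventually_small_level (d / 2) ltac:(lra))
                (eventually_S (fun n => d * INR n <= visits_y n) H)) as HE.
  eapply filter_imp; [|exact HE]. intros m [Hs Hf]. exact (thick_of_small m d Hs Hf).
Qed.

Lemma frequently_thick d : 0 < d ->
  frequently (fun n => d * INR n <= visits_y n) -> frequently (fun m => thick m (d / 2)).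
Proof.
  intros Hd H.
  pose proof (frequently_eventually _ _ (frequently_S (fun n => d * INR n <= visits_y n) H)
                (eventually_small_level (d / 2) ltac:(lra))) as HF.
  eapply frequently_imp; [|exact HF]. intros m [Hf Hs]. exact (thick_of_small m d Hs Hf).
Qed.

Lemma eventually_lenA (P : nat -> Prop) : eventually P -> eventually (fun m => P (lenA (S m))).
Proof.
  intros [N HN]. exists N. intros m Hm. apply HN.
  pose proof (lenA_ge HA1_nonempty (S m)). lia.
Qed.

Lemma dens_up_transfer :
  Rbar_lt 0 (dens_up (Ncyl y z r)) <-> Rbar_lt 0 (dens_up (Ncyl Ty z r)).
Proof.
  rewrite !dens_up_pos. split; intros [d [Hd H]].
  - exists (d / 8). split; [lra|]. apply frequently_lenA.
    eapply frequently_imp; [|apply (frequently_thick d Hd H)].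
    intros m Hm. pose proof (visits_T_level_end_ge m (d / 2) ltac:(lra) Hm).
    unfold visits_T in *. lra.
  - apply NNPP. intro Hno. set (δ := Rmin (d / 20) 1).
    assert (Hδ : 0 < δ <= 1) by (split; [apply Rmin_pos; lra|apply Rmin_r]).
    assert (Hδd : δ <= d / 20) by apply Rmin_l.
    pose proof (visits_T_eventually_le δ Hδ
                  (eventually_thin δ (proj1 Hδ)
                     (not_pos_frequently _ Hno (δ / 2) ltac:(lra)))) as HT.
    apply (frequently_ratio_absurd visits_T d Hd).
    eapply frequently_imp; [|exact (frequently_eventually _ _ H HT)].
    intros N [H1 H2]. split; auto. pose proof (pos_INR N). nra.
Qed.

Lemma dens_low_transfer :
  Rbar_lt 0 (dens_low (Ncyl y z r)) <-> Rbar_lt 0 (dens_low (Ncyl Ty z r)).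
Proof.
  rewrite !dens_low_pos. split; intros [d [Hd H]].
  - exists (d / 32). split; [lra|].
    eapply filter_imp;
      [|apply (visits_T_eventually_ge (d / 2) ltac:(lra) (eventually_thick d Hd H))].
    intros N HN. unfold visits_T in HN. lra.
  - apply NNPP. intro Hno. set (δ := Rmin (d / 8) 1).
    assert (Hδ : 0 < δ) by (apply Rmin_pos; lra).
    assert (Hδd : δ <= d / 8) by apply Rmin_l.
    pose proof (frequently_thin δ Hδ (not_pos_eventually _ Hno (δ / 2) ltac:(lra))) as HT.
    apply (frequently_ratio_absurd visits_T d Hd).
    apply frequently_lenA.
    eapply frequently_imp; [|exact (frequently_eventually _ _ HT (eventually_lenA _ H))].
    intros m [Hm HN]. pose proof (visits_T_level_end_le m δ Hm). pose proof (pos_INR (lenA (S m))).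
    split; [exact HN|]. nra.
Qed.

End DensityTransfer.

End Construction.

Lemma seteq_congr (P Q P' Q' : point -> Prop) :
  seteq P P' -> seteq Q Q' -> seteq P' Q' -> seteq P Q.
Proof. intros HP HQ H z. rewrite (HP z), (HQ z). apply H. Qed.

Lemma ssub_congr (P Q P' Q' : point -> Prop) :
  seteq P P' -> seteq Q Q' -> ssub P' Q' -> ssub P Q.
Proof.
  intros HP HQ [H1 H2]. split.
  - intros z Hz. apply HQ, H1, HP, Hz.
  - intro H. apply H2.
    exact (seteq_congr _ _ _ _ (fun z => iff_sym (HP z)) (fun z => iff_sym (HQ z)) H).
Qed.

Lemma Case_transfer (X X' : point -> Prop) (x x' : point) i :
  seteq (omega_xi X' banach_low x') (omega_xi X banach_low x) ->
  seteq (omega_xi X' dens_low x') (omega_xi X dens_low x) ->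
  seteq (omega_xi X' dens_up x') (omega_xi X dens_up x) ->
  (seteq (omega_xi X banach_up x) (omega_sigma X x) ->
     seteq (omega_xi X' banach_up x') (omega_xi X banach_up x) /\
     ssub (omega_xi X' banach_up x') (omega_sigma X' x')) ->
  Case X x i false -> Case X' x' i true.
Proof.
  intros Hbl Hdl Hdu Hbu.
  destruct i as [|[|[|[|[|[|[|i]]]]]]]; simpl; try tauto;
    (intros (H1 & H2 & H3 & H4); destruct (Hbu H4) as [Hbu' Hlast];
     refine (conj _ (conj _ (conj _ Hlast)));
     [ first [apply (seteq_congr _ _ _ _ Hbl Hdl) | apply (ssub_congr _ _ _ _ Hbl Hdl)]
     | first [apply (seteq_congr _ _ _ _ Hdl Hdu) | apply (ssub_congr _ _ _ _ Hdl Hdu)]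
     | first [apply (seteq_congr _ _ _ _ Hdu Hbu') | apply (ssub_congr _ _ _ _ Hdu Hbu')] ];
     assumption).
Qed.

Lemma banach_low_Nset_not_pos (x z p : point) :
  (forall i, ~ agree (shiftn i p) z 3) ->
  (forall l, exists q, forall t, (t < l + 3)%nat -> x (q + t)%nat = p t) ->
  ~ Rbar_lt 0 (banach_low (Nset x (Defs.ball z (/ 2 ^ 3)))).
Proof.
  intros Hp Hseg. apply banach_low_not_pos. intro l. destruct (Hseg l) as [q Hq].
  exists q. apply cnt_eq0. intros i Hi Hn. apply (Hp i). intros t Ht.
  rewrite <- (Ncyl_of_Nset_ball _ _ _ _ Hn t Ht). unfold shiftn.
  rewrite <- Nat.add_assoc. symmetry. apply Hq. lia.
Qed.

Lemma not_contained_nonempty k L (w : list nat) : (2 <= k)%nat -> (3 <= L)%nat ->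
  ~ contained (Pi k L) w -> (1 <= length w)%nat.
Proof.
  intros Hk HL Hw. destruct w as [|a w]; [|simpl; lia]. exfalso. apply Hw.
  exists p01. split; [apply p01_Pi; auto|]. intros i Hi. simpl in Hi. lia.
Qed.

Section Omega.
Variables (k L : nat) (A1 : list nat) (C : nat -> list nat) (y Ty : point).
Hypothesis Hk : (2 <= k)%nat.
Hypothesis HL : (3 <= L)%nat.
Hypothesis HC_contained : forall n, (1 <= n)%nat -> contained (Pi k L) (C n).
Hypothesis HC_onto : forall w, contained (Pi k L) w -> exists n, (1 <= n)%nat /\ C n = w.
Hypothesis HA1_alphabet : forall a, In a A1 -> (a < k)%nat.
Hypothesis HA1_not_Pi : ~ contained (Pi k L) A1.
Hypothesis Hy : Trans k L y.
Hypothesis HTy : forall m, is_prefix (Aseq A1 C y m) Ty.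

Notation lenA := (lenA A1 C y).
Notation ypos := (ypos A1 C y).

Lemma A1_nonempty : (1 <= length A1)%nat.
Proof. exact (not_contained_nonempty k L A1 Hk HL HA1_not_Pi). Qed.

Lemma y_Pi : Pi k L y.
Proof. exact (proj1 Hy). Qed.

Lemma y_approaches p : Pi k L p -> forall R M, exists q, (M <= q)%nat /\ agree (shiftn q y) p R.
Proof.
  intros Hp R M. destruct (proj2 (proj2 Hy p) Hp) as [_ Hos].
  destruct (Hos (/ 2 ^ R) ltac:(apply Rinv_0_lt_compat, pow_lt; lra) M) as [q [Hq Hd]].
  exists q. split; auto. apply agree_of_dist_lt, Hd.
Qed.

Lemma Ty_copies_y m t : (t < S m)%nat -> Ty (ypos m 0 + t)%nat = y t.
Proof.
  intro Ht. apply (Ty_Y A1 C y Ty HTy); auto.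
  pose proof (lenA_ge A1 C y A1_nonempty m). simpl. nia.
Qed.

Lemma Ty_in_Sigma : in_Sigma k Ty.
Proof.
  assert (Hall : forall m a, In a (Aseq A1 C y m) -> (a < k)%nat).
  { induction m as [|m IH]; intros a Ha; [auto|]. simpl in Ha.
    repeat rewrite in_app_iff in Ha. destruct Ha as [Ha|[[Ha|Ha]|Ha]]; auto.
    - destruct (HC_contained (S m) ltac:(lia)) as [p [[Hp _] Hpre]].
      destruct (In_nth _ _ 0%nat Ha) as [i [Hi <-]]. rewrite <- Hpre by auto. apply Hp.
    - unfold rep in Ha. apply in_concat in Ha as [w [Hw Ha]]. apply repeat_spec in Hw. subst w.
      unfold Yw in Ha. apply in_map_iff in Ha as [t [<- _]]. apply (proj1 y_Pi). }
  intro j. pose proof (lenA_ge A1 C y A1_nonempty j) as Hj.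
  rewrite (Ty_A A1 C y Ty HTy j) by lia. apply (Hall j), nth_In. exact Hj.
Qed.

Lemma Ty_not_Pi : ~ Pi k L Ty.
Proof. intro H. apply HA1_not_Pi. exists Ty. split; auto. apply (HTy 0%nat). Qed.

Lemma Ty_in_omega_sigma : omega_sigma (in_Sigma k) Ty Ty.
Proof.
  split; [apply Ty_in_Sigma|]. intros eps He M. destruct (inv_pow2_small eps He) as [r Hr].
  set (m := (M + r)%nat). pose proof (lenA_ge A1 C y A1_nonempty m).
  exists (lenA m + lenB A1 C y m)%nat. split; [unfold m in *; lia|].
  eapply Rle_lt_trans; [apply dist_le_agree|exact Hr].
  intros i Hi. apply (Ty_A_again A1 C y Ty HTy). unfold m in *. lia.
Qed.

Lemma Pi_in_omega_sigma_Ty z : Pi k L z -> omega_sigma (in_Sigma k) Ty z.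
Proof.
  intro Hz. split; [apply Hz|]. intros eps He M. destruct (inv_pow2_small eps He) as [r Hr].
  destruct (y_approaches z Hz r 0) as [q [_ Hq]].
  set (m := (M + q + r)%nat). pose proof (lenA_ge A1 C y A1_nonempty m).
  exists (ypos m 0 + q)%nat. split; [pose proof (lenA_le_ypos A1 C y m 0); unfold m in *; lia|].
  eapply Rle_lt_trans; [apply dist_le_agree|exact Hr].
  intros i Hi. rewrite <- (Hq i Hi). unfold shiftn. rewrite <- Nat.add_assoc.
  apply Ty_copies_y. unfold m. lia.
Qed.

Lemma omega_banach_low_y_empty z : ~ omega_xi (Pi k L) banach_low y z.
Proof.
  intros [_ H]. destruct (periodic_Pi_avoiding k L z Hk HL) as [p [Hp Havoid]].
  apply (banach_low_Nset_not_pos y z p Havoid).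
  - intro l. destruct (y_approaches p Hp (l + 3) 0) as [q [_ Hq]]. exists q. apply Hq.
  - apply H, Rinv_0_lt_compat, pow_lt. lra.
Qed.

Lemma omega_banach_low_Ty_empty z : ~ omega_xi (in_Sigma k) banach_low Ty z.
Proof.
  intros [_ H]. destruct (periodic_Pi_avoiding k L z Hk HL) as [p [Hp Havoid]].
  apply (banach_low_Nset_not_pos Ty z p Havoid).
  - intro l. destruct (HC_onto (map p (seq 0 (l + 3)))) as [[|m] [Hn E]].
    { exists p. split; auto. intros i Hi. rewrite length_map, length_seq in Hi.
      symmetry. apply nth_map_seq, Hi. }
    { lia. }
    exists (lenA m). intros t Ht. rewrite (Ty_C A1 C y Ty HTy).
    + rewrite E. apply nth_map_seq, Ht.
    + unfold lenC. rewrite E, length_map, length_seq. exact Ht.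
  - apply H, Rinv_0_lt_compat, pow_lt. lra.
Qed.

Lemma omega_xi_Ty_seteq (D : (nat -> Prop) -> Rbar) :
  monotone_density D -> (forall A, Rbar_lt 0 (D A) -> exists j, A j) ->
  (forall z r, Rbar_lt 0 (D (Ncyl y z r)) <-> Rbar_lt 0 (D (Ncyl Ty z r))) ->
  seteq (omega_xi (in_Sigma k) D Ty) (omega_xi (Pi k L) D y).
Proof.
  intros HD Hne Htr z. unfold omega_xi. rewrite !balls_pos_iff_cylinders_pos by exact HD.
  split.
  - intros [_ H]. assert (Hy' : forall r, Rbar_lt 0 (D (Ncyl y z r))) by (intro; apply Htr, H).
    split; auto. apply NNPP. intro Hz. destruct (not_Pi_isolated k L z Hz) as [r Hr].
    destruct (Hne _ (Hy' r)) as [j Hj]. exact (Hr _ (Pi_shiftn k L y j y_Pi) Hj).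
  - intros [Hz H]. split; [apply Hz|]. intro r. apply Htr, H.
Qed.

Lemma banach_up_transfer :
  (forall p, Pi k L p -> omega_xi (Pi k L) banach_up y p) ->
  forall z r, Rbar_lt 0 (banach_up (Ncyl y z r)) <-> Rbar_lt 0 (banach_up (Ncyl Ty z r)).
Proof.
  intros HBu z r. split; intro H.
  - eapply Rbar_lt_le_trans; [exact H|]. apply banach_up_le. intros l m0.
    set (m := (m0 + l + r)%nat). exists (ypos m 0 + m0)%nat. right.
    apply cnt_Ncyl_copy. intros t Ht. rewrite <- Nat.add_assoc. symmetry.
    apply Ty_copies_y. unfold m. lia.
  - destruct (classic (exists p, Pi k L p /\ agree p z r)) as [[p [Hp Hpz]]|Hno].
    + destruct (HBu p Hp) as [_ Hp']. rewrite balls_pos_iff_cylinders_pos in Hp'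
        by apply banach_up_monotone.
      eapply Rbar_lt_le_trans; [apply (Hp' r)|]. apply banach_up_monotone.
      intros j _ Hj i Hi. rewrite Hj by exact Hi. apply Hpz, Hi.
    + exfalso.
      refine (banach_up_Ncyl_outside_Pi A1 C y Ty HTy k L A1_nonempty y_Pi HC_contained z r _ H).
      intros p Hp Hpz. eauto.
Qed.

Lemma omega_banach_up_Ty :
  seteq (omega_xi (Pi k L) banach_up y) (omega_sigma (Pi k L) y) ->
  seteq (omega_xi (in_Sigma k) banach_up Ty) (omega_xi (Pi k L) banach_up y) /\
  ssub (omega_xi (in_Sigma k) banach_up Ty) (omega_sigma (in_Sigma k) Ty).
Proof.
  intro Hs.
  assert (HBu : forall p, omega_xi (Pi k L) banach_up y p <-> Pi k L p)
    by (intro p; rewrite (Hs p); apply (proj2 Hy)).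
  assert (HT : seteq (omega_xi (in_Sigma k) banach_up Ty) (omega_xi (Pi k L) banach_up y)).
  { apply omega_xi_Ty_seteq; [apply banach_up_monotone|apply banach_up_pos_nonempty|].
    apply banach_up_transfer. intros p. apply HBu. }
  split; [exact HT|split].
  - intros z Hz. apply Pi_in_omega_sigma_Ty, HBu, HT, Hz.
  - intro Heq. apply Ty_not_Pi, HBu, HT, Heq, Ty_in_omega_sigma.
Qed.

End Omega.

Theorem lemma5p4 :
  forall (k L : nat), (2 <= k)%nat -> (3 <= L)%nat ->
  forall (C : nat -> list nat) (A1 : list nat),
    (* C_1, C_2, ... enumerates all finite words contained in Pi_L *)
    (forall n, (1 <= n)%nat -> contained (Pi k L) (C n)) ->
    (forall w, contained (Pi k L) w -> exists n, (1 <= n)%nat /\ C n = w) ->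
    (forall n m, (1 <= n)%nat -> (1 <= m)%nat -> C n = C m -> n = m) ->
    (* A_1 is a finite word (over {0,...,k-1}) not contained in Pi_L *)
    (forall a, In a A1 -> (a < k)%nat) ->
    ~ contained (Pi k L) A1 ->
  forall y : point, Trans k L y ->
    (* |C_n| = o(|A_n|) *)
    (forall eps, 0 < eps -> exists N : nat, forall m, (N <= m)%nat ->
        INR (length (C (S m))) <= eps * INR (length (Aseq A1 C y m))) ->
  forall Ty : point, (forall m, is_prefix (Aseq A1 C y m) Ty) ->
  forall i : nat, (1 <= i <= 6)%nat ->
    Case (Pi k L) y i false -> Case (in_Sigma k) Ty i true.
Proof.
  (* Injectivity of the enumeration is not needed, and [Case] is [False] for other [i]. *)
  intros k L Hk HL C A1 HC_contained HC_onto _ HA1_alphabet HA1_not_Pi y Hy HC_small Ty HTy i _.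
  pose proof (not_contained_nonempty k L A1 Hk HL HA1_not_Pi) as HA1len.
  apply Case_transfer.
  - intro z. split; intro H; exfalso.
    + exact (omega_banach_low_Ty_empty k L A1 C y Ty Hk HL HC_onto HTy z H).
    + exact (omega_banach_low_y_empty k L y Hk HL Hy z H).
  - apply (omega_xi_Ty_seteq k L y Ty Hy); [apply dens_low_monotone|apply dens_low_pos_nonempty|].
    exact (dens_low_transfer A1 C y Ty HTy HA1len HC_small).
  - apply (omega_xi_Ty_seteq k L y Ty Hy); [apply dens_up_monotone|apply dens_up_pos_nonempty|].
    exact (dens_up_transfer A1 C y Ty HTy HA1len HC_small).
  - exact (omega_banach_up_Ty k L A1 C y Ty Hk HL HC_contained HA1_alphabet HA1_not_Pi Hy HTy).
Qed.
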